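(* Let $(E,\mathscr{T},\le)$ be a $T_2$-preordered Tychonoff space such that, with $\mathcal{F}$ the family of continuous isotone functions $f:E\to[0,1]$, $G(\le)=\bigcap_{f\in\mathcal{F}}G_f$. Let $(\beta E,\mathscr{T}_\beta,\le_\beta)$ be the Stone–Čech compactification $\beta:E\to\beta E$ endowed with the preorder $G(\le_\beta)=\bigcap_{f\in\mathcal{F}}G_{\tilde f}$, where $\tilde f:\beta E\to[0,1]$ is the unique continuous extension of $f\circ\beta^{-1}$. Let $c:E\to cE$ be a Hausdorff $T_2$-preorder compactification $(cE,\mathscr{T}_c,\le_c)$ such that (a) every continuous function $f:E\to[0,1]$ can be extended to a continuous function on $cE$ (i.e. $f\circ c^{-1}$ extends), and (b) every continuous isotone function $f:E\to[0,1]$ can be extended to a continuous isotone function on $(cE,\le_c)$. Then $c$ is equivalent to $\beta:E\to(\beta E,\mathscr{T}_\beta,\le_\beta)$.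
   Context: A topological preordered space is $(E,\mathscr{T},\le)$ with $\le$ a preorder; it is $T_2$-preordered if $G(\le)=\{(x,y):x\le y\}$ is closed in $E\times E$. Isotone: $x\le y\Rightarrow f(x)\le f(y)$. $G_f=\{(x,y):f(x)\le f(y)\}$. A preorder compactification is a preorder embedding (continuous isotone injective map which is a homeomorphism onto its image with isotone inverse for the induced preorder) $c:E\to cE$ into a compact topological preordered space with dense image; Hausdorff $T_2$-preorder compactification: additionally $cE$ Hausdorff and $\le_c$ closed. $c_1\le c_2$ means there is a continuous isotone $C:c_2E\to c_1E$ with $C\circ c_2=c_1$; equivalent means $c_1\le c_2$ and $c_2\le c_1$. *)

From HB Require Import structures.
From mathcomp Require Import all_boot all_order all_algebra.
From mathcomp Require Import all_classical all_reals.
From mathcomp Require Import topology normedtype.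
Set Implicit Arguments. Unset Strict Implicit. Unset Printing Implicit Defensive.
Import Order.TTheory GRing.Theory Num.Theory.
Import numFieldNormedType.Exports.
Local Open Scope classical_set_scope.
Local Open Scope ring_scope.

Definition unit_valued {R : realType} {T : Type} (f : T -> R) : Prop :=
  forall x, 0 <= f x <= 1.

Definition tychonoff_space (R : realType) (T : topologicalType) : Prop :=
  hausdorff_space T /\
  forall (x : T) (B : set T), closed B -> ~ B x ->
    exists f : T -> R, [/\ continuous f, unit_valued f, f x = 0 &
                          forall y, B y -> f y = 1].

Definition preorder_rel {T : Type} (le : T -> T -> Prop) : Prop :=
  (forall x, le x x) /\ (forall x y z, le x y -> le y z -> le x z).

Definition closed_preorder {T : topologicalType} (le : T -> T -> Prop) : Prop :=
  closed [set p : T * T | le p.1 p.2].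

Definition isotone {T U : Type} (leT : T -> T -> Prop) (leU : U -> U -> Prop)
  (f : T -> U) : Prop := forall x y, leT x y -> leU (f x) (f y).

Definition cont_isotone_unit (R : realType) {E : topologicalType}
  (le : E -> E -> Prop) (f : E -> R) : Prop :=
  [/\ continuous f, unit_valued f & isotone le (fun a b : R => a <= b) f].

Definition top_embedding {T U : topologicalType} (c : T -> U) : Prop :=
  [/\ continuous c, injective c &
      forall A : set T, open A ->
        exists V : set U, open V /\ c @` A = V `&` range c].

Definition preorder_embedding {T U : topologicalType}
  (leT : T -> T -> Prop) (leU : U -> U -> Prop) (c : T -> U) : Prop :=
  top_embedding c /\ forall x y, leT x y <-> leU (c x) (c y).

Definition hausdorff_T2_preorder_compactification {E cE : topologicalType}
  (le : E -> E -> Prop) (lec : cE -> cE -> Prop) (c : E -> cE) : Prop :=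
  [/\ compact [set: cE], hausdorff_space cE, preorder_rel lec,
      closed_preorder lec & preorder_embedding le lec c /\ dense (range c)].

Definition stone_cech {E bE : topologicalType} (b : E -> bE) : Prop :=
  [/\ compact [set: bE], hausdorff_space bE, top_embedding b, dense (range b) &
      forall (K : topologicalType) (g : E -> K),
        compact [set: K] -> hausdorff_space K -> continuous g ->
        exists h : bE -> K, continuous h /\ forall x, h (b x) = g x].

(* The preorder on bE:  u <=_b v  iff  for every f in F, f~ u <= f~ v, where
   f~ is the (unique, by density and Hausdorffness of R) continuous extension
   of f o b^-1 to bE. *)
Definition le_beta (R : realType) {E bE : topologicalType}
  (le : E -> E -> Prop) (b : E -> bE) (u v : bE) : Prop :=
  forall f : E -> R, cont_isotone_unit le f ->
  forall g : bE -> R, continuous g -> (forall x, g (b x) = f x) -> g u <= g v.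

Definition compactification_le {E c1E c2E : topologicalType}
  (le1 : c1E -> c1E -> Prop) (le2 : c2E -> c2E -> Prop)
  (c1 : E -> c1E) (c2 : E -> c2E) : Prop :=
  exists C : c2E -> c1E, [/\ continuous C, isotone le2 le1 C &
                            forall x, C (c2 x) = c1 x].

Definition compactification_equiv {E c1E c2E : topologicalType}
  (le1 : c1E -> c1E -> Prop) (le2 : c2E -> c2E -> Prop)
  (c1 : E -> c1E) (c2 : E -> c2E) : Prop :=
  compactification_le le1 le2 c1 c2 /\ compactification_le le2 le1 c2 c1.

From HB Require Import structures.
From mathcomp Require Import all_boot all_order all_algebra.
From mathcomp Require Import all_classical all_reals.
From mathcomp Require Import topology normedtype.
From mathcomp Require Import lra.
Import Order.TTheory GRing.Theory Num.Theory.
Import numFieldNormedType.Exports.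
Set Implicit Arguments. Unset Strict Implicit. Unset Printing Implicit Defensive.
Local Open Scope classical_set_scope.
Local Open Scope ring_scope.

(* By the universal property of the Stone-Cech compactification, c extends to
   a continuous h : bE -> cE; h is onto since its image is compact and dense,
   and one-to-one by (a): points of bE separated by a continuous function
   remain separated after that function is pushed to cE and pulled back along
   h.  Being a continuous bijection from a compact space onto a Hausdorff one,
   h is a homeomorphism.  It is isotone because, by Nachbin's theorem, u <=_c v
   fails only if some continuous isotone g : cE -> [0,1] has g v < g u, and
   g o c lies in F with extension g o h.  Its inverse is isotone by (b): every
   extension f~ equals g o h for an isotone g.  Nachbin's theorem itself is the
   isotone version of Urysohn's lemma, built from a dyadic family of decreasing
   open and closed sets in the compact T2-preordered space. *)

Section Dyadic.
Variable R : realType.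

Definition dyadic (n k : nat) : R := k%:R / (2 ^ n)%:R.

Lemma dyadic_ge0 n k : 0 <= dyadic n k.
Proof. by rewrite /dyadic divr_ge0 // ler0n. Qed.

Lemma dyadic_le1E n k : (dyadic n k <= 1) = (k <= 2 ^ n)%N.
Proof. by rewrite /dyadic ler_pdivrMr ?ltr0n ?expn_gt0 // mul1r ler_nat. Qed.

Lemma dyadic_ltE n k m j : (dyadic n k < dyadic m j) = (k * 2 ^ m < j * 2 ^ n)%N.
Proof.
rewrite /dyadic ltr_pdivrMr ?ltr0n ?expn_gt0 // mulrAC.
by rewrite ltr_pdivlMr ?ltr0n ?expn_gt0 // -!natrM ltr_nat.
Qed.

Lemma dyadic_dense (a c : R) : 0 <= a -> a < c -> exists n k, a < dyadic n k < c.
Proof.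
move=> a0 ac; set N := (Num.truncn ((c - a)^-1)).+1.
have p2 : 0 < (2 ^ N)%:R :> R by rewrite ltr0n expn_gt0.
have gap : 1 < c * (2 ^ N)%:R - a * (2 ^ N)%:R.
  have ca : 0 < c - a by rewrite subr_gt0.
  have N2 : (c - a)^-1 < (2 ^ N)%:R.
    by apply: lt_le_trans (truncnS_gt _) _; rewrite ler_nat ltnW // ltn_expl.
  by rewrite -mulrBl -[X in X < _](mulfV (lt0r_neq0 ca)) ltr_pM2l.
have a2 : 0 <= a * (2 ^ N)%:R by rewrite mulr_ge0 // ltW.
have /andP[t1 t2] := truncn_itv a2.
exists N, (Num.truncn (a * (2 ^ N)%:R)).+1; apply/andP; split.
  by rewrite /dyadic ltr_pdivlMr.
by rewrite /dyadic ltr_pdivrMr // -natr1; lra.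
Qed.

End Dyadic.

Definition decreasing {T : Type} (le : T -> T -> Prop) (S : set T) : Prop :=
  forall x y, le x y -> S y -> S x.

Definition downset {T : Type} (le : T -> T -> Prop) (S : set T) : set T :=
  [set y | exists2 x, S x & le y x].

Definition upset {T : Type} (le : T -> T -> Prop) (S : set T) : set T :=
  downset (fun x y => le y x) S.

Lemma closed_downset (T : topologicalType) (r : T -> T -> Prop) (S : set T) :
  closed [set p : T * T | r p.1 p.2] -> compact S -> closed (downset r S).
Proof.
move=> clr cS; rewrite -[downset r S]setCK; apply: open_closedC.
rewrite openE => y ndy.
have cover x : S x -> \forall x' \near x & y' \near y, ~ r y' x'.
  move=> Sx; have nyx : ~ r y x by move=> yx; apply: ndy; exists x.
  have := closed_openC clr; rewrite openE => /(_ (y, x) nyx).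
  case=> -[P Q] [/= Py Qx] PQ.
  by exists (Q, P) => //= -[a b] /= [Qa Pb]; exact: (PQ (b, a)).
have := proj1 (compact_near_coveringP S) cS T (nbhs y) (fun y' x' => ~ r y' x') _ cover.
move=> /(_ (nbhs_filter y)); apply: filterS => y' ny' [x Sx]; exact: ny'.
Qed.

Lemma closed_upset (T : topologicalType) (r : T -> T -> Prop) (S : set T) :
  closed [set p : T * T | r p.1 p.2] -> compact S -> closed (upset r S).
Proof.
move=> clr; apply: closed_downset.
exact: (proj1 (continuous_closedP _) swap_continuous _ clr).
Qed.

Section Interpolation.
Context (X : topologicalType) (le : X -> X -> Prop).
Hypothesis cptX : compact [set: X].
Hypothesis hX : hausdorff_space X.
Hypothesis pre : preorder_rel le.
Hypothesis clG : closed_preorder le.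

Definition closed_open_pair (KU : set X * set X) : Prop :=
  [/\ closed KU.1, open KU.2, decreasing le KU.1, decreasing le KU.2 &
      KU.1 `<=` KU.2].

Definition open_closed_pair (VL : set X * set X) : Prop :=
  [/\ open VL.1, closed VL.2, decreasing le VL.1, decreasing le VL.2 &
      VL.1 `<=` VL.2].

Definition refines (KU VL : set X * set X) : Prop :=
  [/\ open_closed_pair VL, KU.1 `<=` VL.1 & VL.2 `<=` KU.2].

Lemma decreasing_interpolation KU : closed_open_pair KU -> exists VL, refines KU VL.
Proof.
case: KU => K U [/= clK oU dK dU KU]; have [refl trans] := pre.
have KUnbhs : set_nbhs K U.
  by move=> x Kx; rewrite /= nbhsE; exists U => //; split => //; exact: KU.
have [W KW clWU] := compact_normal hX cptX clK KUnbhs.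
have compactC (S : set X) : closed S -> compact S.
  by move=> clS; exact: (subclosed_compact clS cptX (@subsetT _ S)).
(* The largest decreasing subset of W° is open, the decreasing hull of the
   closure of W is closed, and both lie between K and U. *)
exists (~` upset le (~` W°), downset le (closure W)); split => /=.
- split => /=.
  + apply: closed_openC; apply: closed_upset => //.
    by apply: compactC; apply: open_closedC; exact: open_interior.
  + by apply: closed_downset => //; apply: compactC; exact: closed_closure.
  + move=> x y xy nWy [z nWz zx]; apply: nWy; exists z => //; exact: trans zx xy.
  + by move=> x y xy [z Wz yz]; exists z => //; exact: trans xy yz.
  + move=> v nWv; exists v; last exact: refl.
    apply: subset_closure; apply: interior_subset.
    by apply: contrapT => nv; apply: nWv; exists v => //; exact: refl.
- by move=> k Kk [z nWz zk]; apply: nWz; apply: KW; exact: dK zk Kk.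
- by move=> y [z Wz yz]; exact: dU yz (clWU z Wz).
Qed.

Lemma interpolant_ex KU : exists VL, closed_open_pair KU -> refines KU VL.
Proof.
have [/decreasing_interpolation [VL ?]|nKU] := pselect (closed_open_pair KU).
  by exists VL.
by exists KU => /nKU.
Qed.

Definition interpolant KU : set X * set X := projT1 (cid (interpolant_ex KU)).

Lemma interpolantP KU : closed_open_pair KU -> refines KU (interpolant KU).
Proof. exact: projT2 (cid (interpolant_ex KU)). Qed.

End Interpolation.

Section IsotoneUrysohn.
Context (X : topologicalType) (le : X -> X -> Prop).
Hypothesis cptX : compact [set: X].
Hypothesis hX : hausdorff_space X.
Hypothesis pre : preorder_rel le.
Hypothesis clG : closed_preorder le.
Variables A B : set X.
Hypothesis clA : closed A.
Hypothesis clB : closed B.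
Hypothesis dA : decreasing le A.
Hypothesis dnB : decreasing le (~` B).
Hypothesis AB : A `<=` ~` B.

Let interp := @interpolant X le cptX hX pre clG.
Let P0 := interp (A, ~` B).
Let P1 := interp (P0.2, ~` B).

(* [level n k] is the pair (V, L) attached to the dyadic k / 2^n: odd
   indices are interpolated between their neighbours of stage n - 1. *)
Fixpoint level (n k : nat) : set X * set X :=
  match n with
  | 0 => if k == 0 then P0 else P1
  | m.+1 => if odd k then interp ((level m k./2).2, (level m (k./2).+1).1)
            else level m k./2
  end.

Lemma levelSe n j : level n.+1 j.*2 = level n j.
Proof. by rewrite /= odd_double doubleK. Qed.

Lemma levelSo n j : level n.+1 j.*2.+1 = interp ((level n j).2, (level n j.+1).1).
Proof. by rewrite /= odd_double /= uphalf_double. Qed.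

Lemma P0_refines : refines le (A, ~` B) P0.
Proof.
by apply: interpolantP; split => //=; exact: closed_openC.
Qed.

Lemma P1_refines : refines le (P0.2, ~` B) P1.
Proof.
have [[_ clL _ dL _] _ LB] := P0_refines.
by apply: interpolantP; split => //=; exact: closed_openC.
Qed.

Lemma level_spec n :
  (forall k, (k <= 2 ^ n)%N -> open_closed_pair le (level n k)) /\
  (forall k, (k < 2 ^ n)%N -> (level n k).2 `<=` (level n k.+1).1).
Proof.
elim: n => [|n [pair step]].
  have [P0oc _ _] := P0_refines; have [P1oc P01 _] := P1_refines.
  by split=> -[|[|//]].
have refines_step j : (j < 2 ^ n)%N ->
    refines le ((level n j).2, (level n j.+1).1) (level n.+1 j.*2.+1).
  move=> jn; rewrite levelSo; apply: interpolantP.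
  have [_ clL _ dL _] := pair j (ltnW jn); have [oV _ dV _ _] := pair j.+1 jn.
  by split => //=; exact: step.
split=> k; rewrite expnS mul2n -[k]odd_double_half;
  case: (odd k); move: k./2 => j; rewrite ?(add0n, add1n) => kn.
- by rewrite ltn_double in kn; have [] := refines_step _ kn.
- by rewrite levelSe; apply: pair; rewrite -leq_double.
- rewrite -doubleS leq_double in kn; rewrite -doubleS levelSe.
  by have [_ _] := refines_step _ kn.
- by rewrite ltn_double in kn; rewrite levelSe; have [_] := refines_step _ kn.
Qed.

Lemma level_pair n k : (k <= 2 ^ n)%N -> open_closed_pair le (level n k).
Proof. exact: (level_spec n).1. Qed.

Lemma level_lift n m k : level (m + n) (k * 2 ^ m) = level n k.
Proof.
elim: m => [|m IH]; first by rewrite expn0 muln1.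
by rewrite addSn expnS mulnCA mul2n levelSe.
Qed.

Lemma level_chain n k j : (k < j <= 2 ^ n)%N -> (level n k).2 `<=` (level n j).1.
Proof.
have [_ step] := level_spec n.
elim: j => // j IH /andP[]; rewrite ltnS leq_eqVlt => /orP[/eqP-> jn|kj jn].
  exact: step.
apply: subset_trans (IH _) _; first by rewrite kj ltnW.
have [_ _ _ _ VL] := level_pair (ltnW jn); exact: subset_trans VL (step j jn).
Qed.

Lemma level_cross n k m j : (j <= 2 ^ m)%N ->
  (k * 2 ^ m < j * 2 ^ n)%N -> (level n k).2 `<=` (level m j).1.
Proof.
move=> jm kj; rewrite -(level_lift n m k) -(level_lift m n j) [(n + m)%N]addnC.
by apply: level_chain; rewrite kj expnD leq_mul2r jm orbT.
Qed.

Lemma level0 n : A `<=` (level n 0).1.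
Proof.
have := level_lift 0 n 0; rewrite addn0 mul0n => ->.
by have [_ ? _] := P0_refines.
Qed.

Lemma level_disjoint n k : (k <= 2 ^ n)%N -> (level n k).1 `<=` ~` B.
Proof.
move=> kn; have [_ _ _ _ VL] := level_pair kn; apply: subset_trans VL _.
have top : (level n (2 ^ n)).2 `<=` ~` B.
  have := level_lift 0 n 1; rewrite addn0 mul1n => ->.
  by have [_ _ ?] := P1_refines.
move: kn; rewrite leq_eqVlt => /orP[/eqP -> //|kn].
apply: subset_trans (@level_chain n k (2 ^ n) _) _; first by rewrite kn leqnn.
have [_ _ _ _ VL'] := level_pair (leqnn (2 ^ n)); exact: subset_trans VL' top.
Qed.

Variable R : realType.

Definition level_values (x : X) : set R :=
  [set r | r = 1 \/
           exists n k, [/\ (k <= 2 ^ n)%N, (level n k).1 x & r = dyadic R n k]].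

Definition separator (x : X) : R := inf (level_values x).

Lemma level_values_n0 x : level_values x !=set0.
Proof. by exists 1; left. Qed.

Lemma level_values_ge0 x : lbound (level_values x) 0.
Proof. by move=> r [->|[n [k [_ _ ->]]]]; [exact: ler01 | exact: dyadic_ge0]. Qed.

Lemma separator_le x r : level_values x r -> separator x <= r.
Proof. by apply: ge_inf; exists 0; exact: level_values_ge0. Qed.

Lemma separator_ge0 x : 0 <= separator x.
Proof. by apply: lb_le_inf; [exact: level_values_n0 | exact: level_values_ge0]. Qed.

Lemma separator_le1 x : separator x <= 1.
Proof. by apply: separator_le; left. Qed.

Lemma separator_outside x n k : (k <= 2 ^ n)%N -> ~ (level n k).2 x ->
  dyadic R n k <= separator x.
Proof.
move=> kn nLx; apply: lb_le_inf; first exact: level_values_n0.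
move=> r [->|[m [j [jm Vx ->]]]]; first by rewrite dyadic_le1E.
rewrite leNgt dyadic_ltE; apply/negP => jk; apply: nLx.
have [_ _ _ _ VL] := level_pair jm; have [_ _ _ _ VL'] := level_pair kn.
exact/VL'/(level_cross kn jk)/VL.
Qed.

Lemma separator_inside x n k m j : (j <= 2 ^ m)%N ->
  dyadic R n k < dyadic R m j -> (level n k).2 x -> separator x <= dyadic R m j.
Proof.
rewrite dyadic_ltE => jm kj Lx; apply: separator_le; right; exists m, j.
by split => //; exact: (level_cross jm kj).
Qed.

Lemma separator_isotone : isotone le (fun a b : R => a <= b) separator.
Proof.
move=> x y xy; apply: lb_le_inf; first exact: level_values_n0.
move=> r [->|[n [k [kn Vy ->]]]]; first exact: separator_le1.
apply: separator_le; right; exists n, k; split => //.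
by have [_ _ dV _ _] := level_pair kn; exact: dV xy Vy.
Qed.

Lemma separator_A x : A x -> separator x = 0.
Proof.
move=> Ax; apply/eqP; rewrite eq_le separator_ge0 andbT.
have -> : 0 = dyadic R 0 0 by rewrite /dyadic mul0r.
by apply: separator_le; right; exists 0%N, 0%N; split => //; exact: level0.
Qed.

Lemma separator_B x : B x -> separator x = 1.
Proof.
move=> Bx; apply/eqP; rewrite eq_le separator_le1 /=.
apply: lb_le_inf; first exact: level_values_n0.
by move=> r [->//|[n [k [kn Vx _]]]]; case: (level_disjoint kn Vx).
Qed.

Lemma separator_near_lt x e : 0 < e -> \forall y \near x, separator y < separator x + e.
Proof.
move=> e0; have xe : separator x < separator x + e by rewrite ltrDl.
have [r [->|[n [k [kn Vx ->]]]] rlt] := inf_lt (level_values_n0 x) xe.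
  by apply: nearW => y; exact: le_lt_trans (separator_le1 y) rlt.
have [oV _ _ _ _] := level_pair kn.
apply: filterS (open_nbhs_nbhs (conj oV Vx)) => y Vy.
by apply: le_lt_trans rlt; apply: separator_le; right; exists n, k.
Qed.

Lemma separator_near_gt x e : 0 < e -> \forall y \near x, separator x - e < separator y.
Proof.
move=> e0; have [xe0|xe0] := ltrP (separator x - e) 0.
  by apply: nearW => y; exact: lt_le_trans xe0 (separator_ge0 y).
have xe : separator x - e < separator x by rewrite ltrBlDr ltrDl.
have [n [k /andP[xr rx]]] := dyadic_dense xe0 xe.
have [m [j /andP[rs sx]]] := dyadic_dense (dyadic_ge0 R n k) rx.
have kn : (k <= 2 ^ n)%N.
  by rewrite -(dyadic_le1E R) ltW // (lt_le_trans rx (separator_le1 x)).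
have jm : (j <= 2 ^ m)%N.
  by rewrite -(dyadic_le1E R) ltW // (lt_le_trans sx (separator_le1 x)).
have nLx : ~ (level n k).2 x.
  by move=> Lx; have := separator_inside jm rs Lx; rewrite leNgt sx.
have [_ clL _ _ _] := level_pair kn.
apply: filterS (open_nbhs_nbhs (conj (closed_openC clL) nLx)) => y nLy.
exact: lt_le_trans xr (separator_outside kn nLy).
Qed.

Lemma separator_continuous : continuous separator.
Proof.
move=> x; apply/cvgrPdist_lt => e e0.
apply: filterS (filterI (separator_near_lt x e0) (separator_near_gt x e0)).
by move=> y [lt gt]; rewrite ltr_norml; apply/andP; split; lra.
Qed.

Lemma isotone_urysohn : exists g : X -> R,
  [/\ continuous g, unit_valued g, isotone le (fun a b : R => a <= b) g,
      (forall x, A x -> g x = 0) & (forall x, B x -> g x = 1)].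
Proof.
exists separator; split.
- exact: separator_continuous.
- by move=> x; rewrite separator_ge0 separator_le1.
- exact: separator_isotone.
- exact: separator_A.
- exact: separator_B.
Qed.

End IsotoneUrysohn.

Lemma nachbin_separation (R : realType) (X : topologicalType) (le : X -> X -> Prop) :
  compact [set: X] -> hausdorff_space X -> preorder_rel le -> closed_preorder le ->
  forall p q, ~ le p q -> exists g : X -> R,
   [/\ continuous g, unit_valued g, isotone le (fun a b : R => a <= b) g & g q < g p].
Proof.
move=> cX hX pre clG p q npq; have [refl trans] := pre.
have clA : closed (downset le [set q]) := closed_downset clG (@compact_set1 X q).
have clB : closed (upset le [set p]) := closed_upset clG (@compact_set1 X p).
have dA : decreasing le (downset le [set q]).
  by move=> x y xy [z zq yz]; exists z => //; exact: trans xy yz.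
have dnB : decreasing le (~` upset le [set p]).
  by move=> x y xy nBy [z zp zx]; apply: nBy; exists z => //; exact: trans zx xy.
have AB : downset le [set q] `<=` ~` upset le [set p].
  by move=> x [_ -> xq] [_ -> px]; exact: npq (trans _ _ _ px xq).
have [g [gc gu gi gA gB]] := isotone_urysohn cX hX pre clG clA clB dA dnB AB R.
exists g; split => //.
by rewrite gA ?gB ?ltr01 //; [exists p | exists q] => //; exact: refl.
Qed.

Lemma hausdorff_closed_diagonal (X : topologicalType) :
  hausdorff_space X -> closed_preorder (@eq X).
Proof.
move=> hX; rewrite /closed_preorder -openC openE => -[x y] /= nxy.
have : ~ cluster (nbhs x) y by move=> cl; apply: nxy; exact: hX cl.
move=> /existsNP [P /existsNP [Q /not_implyP [Px /not_implyP [Qy nPQ]]]].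
by exists (P, Q) => // -[a a0] /= [Pa Qa0] aa0; subst a0; apply: nPQ; exists a.
Qed.

Lemma continuous_comp_fun (S T U : topologicalType) (f : S -> T) (g : T -> U) :
  continuous f -> continuous g -> continuous (g \o f).
Proof. by move=> cf cg x; apply: continuous_comp; [exact: cf | exact: cg]. Qed.

Lemma continuous_dense_eq (T U : topologicalType) (f g : T -> U) (S : set T) :
  hausdorff_space U -> continuous f -> continuous g -> dense S ->
  {in S, f =1 g} -> f = g.
Proof.
move=> hU cf cg dS fg; apply/funext => x; apply: contrapT => nfg.
have : ~ cluster (nbhs (f x)) (g x) by move=> cl; apply: nfg; exact: hU cl.
move=> /existsNP [P /existsNP [Q /not_implyP [Px /not_implyP [Qy nPQ]]]].
have fgx : nbhs x (f @^-1` P `&` g @^-1` Q) by apply: filterI; [exact: cf | exact: cg].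
have [y [/interior_subset [Py Qy'] Sy]] := dS _ (ex_intro _ x fgx) (@open_interior _ _).
by apply: nPQ; exists (f y); split => //; rewrite fg ?inE.
Qed.

Lemma compact_dense_range_surjective (K Y : topologicalType) (h : K -> Y) :
  compact [set: K] -> hausdorff_space Y -> continuous h -> dense (range h) ->
  forall y, exists u, h u = y.
Proof.
move=> cK hY ch dh y; apply: contrapT => ny.
have clh : closed (range h).
  exact: compact_closed hY (continuous_compact (continuous_subspaceT ch) cK).
have nh : ~` range h !=set0 by exists y => -[u _ hu]; exact: ny (ex_intro _ u hu).
by have [z [nz hz]] := dh _ nh (closed_openC clh).
Qed.

Lemma compact_hausdorff_inverse_continuous (K Y : topologicalType)
    (h : K -> Y) (k : Y -> K) :
  compact [set: K] -> hausdorff_space Y -> continuous h ->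
  cancel h k -> cancel k h -> continuous k.
Proof.
move=> cK hY ch hk kh; apply/continuous_closedP => C clC.
have -> : k @^-1` C = h @` C.
  apply/seteqP; split => y /=; first by move=> Cky; exists (k y).
  by move=> [u Cu <-]; rewrite hk.
apply: compact_closed hY (continuous_compact (continuous_subspaceT ch) _).
exact: subclosed_compact clC cK (@subsetT _ C).
Qed.

Section ComparisonMap.
Variables (R : realType) (E : topologicalType) (le : E -> E -> Prop).
Variables (bE : topologicalType) (b : E -> bE).
Hypotheses (cpt_bE : compact [set: bE]) (hbE : hausdorff_space bE).
Hypotheses (cont_b : continuous b) (dense_b : dense (range b)).
Variables (cE : topologicalType) (lec : cE -> cE -> Prop) (c : E -> cE).
Hypotheses (cpt_cE : compact [set: cE]) (hcE : hausdorff_space cE).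
Hypotheses (pre_c : preorder_rel lec) (cl_c : closed_preorder lec).
Hypotheses (cont_c : continuous c) (dense_c : dense (range c)).
Hypothesis c_isotone : isotone le lec c.
Variable h : bE -> cE.
Hypotheses (cont_h : continuous h) (hb : forall x, h (b x) = c x).

Let hR : hausdorff_space R := @norm_hausdorff _ _.

Lemma extension_along_h (g : bE -> R) (g' : cE -> R) :
  continuous g -> continuous g' -> (forall x, g' (c x) = g (b x)) -> g' \o h = g.
Proof.
move=> cg cg' g'c; apply: continuous_dense_eq hR (continuous_comp_fun cont_h cg') cg dense_b _.
by move=> z /set_mem[x _ <-] /=; rewrite hb g'c.
Qed.

Lemma comparison_surjective y : exists u, h u = y.
Proof.
apply: compact_dense_range_surjective cpt_bE hcE cont_h _ y => O O0 oO.
have [z [Oz [x _ cxz]]] := dense_c O0 oO.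
by exists z; split => //; exists (b x); rewrite ?hb.
Qed.

Lemma comparison_injective :
  (forall f : E -> R, continuous f -> unit_valued f ->
     exists g : cE -> R, [/\ continuous g, unit_valued g & forall x, g (c x) = f x]) ->
  injective h.
Proof.
move=> ext u v huv; apply: contrapT => nuv.
have [phi [cphi uphi _ phiuv]] := nachbin_separation R cpt_bE hbE
  (conj (@erefl _) (@eq_trans _)) (hausdorff_closed_diagonal hbE) nuv.
have [psi [cpsi _ psic]] :=
  ext (phi \o b) (continuous_comp_fun cont_b cphi) (fun x => uphi (b x)).
by move: phiuv; rewrite -(extension_along_h cphi cpsi psic) /= huv ltxx.
Qed.

Lemma comparison_isotone : isotone (le_beta R le b) lec h.
Proof.
move=> u v luv; apply: contrapT => nl.
have [g [cg ug ig glt]] := nachbin_separation R cpt_cE hcE pre_c cl_c nl.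
have gc : cont_isotone_unit le (g \o c).
  split; [exact: continuous_comp_fun cont_c cg | by move=> x; exact: ug |].
  by move=> x y /c_isotone /ig.
have := luv _ gc _ (continuous_comp_fun cont_h cg) (fun x => congr1 g (hb x)).
by rewrite /= leNgt glt.
Qed.

Lemma comparison_inverse_isotone (k : cE -> bE) :
  cancel k h ->
  (forall f : E -> R, cont_isotone_unit le f ->
     exists g : cE -> R, [/\ continuous g, unit_valued g,
       isotone lec (fun a b : R => a <= b) g & forall x, g (c x) = f x]) ->
  isotone lec (le_beta R le b) k.
Proof.
move=> kh ext p q lpq f Ff g cg gb.
have [g' [cg' _ ig' g'c]] := ext f Ff.
have g'cg x : g' (c x) = g (b x) by rewrite g'c gb.
by rewrite -(extension_along_h cg cg' g'cg) /= !kh; exact: ig'.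
Qed.

End ComparisonMap.

Unset Implicit Arguments.

Theorem mainTheorem5 (R : realType) (E : topologicalType)
  (le : E -> E -> Prop)
  (bE : topologicalType) (b : E -> bE)
  (cE : topologicalType) (lec : cE -> cE -> Prop) (c : E -> cE) :
  preorder_rel le ->
  closed_preorder le ->
  tychonoff_space R E ->
  (forall x y, le x y <->
     (forall f : E -> R, cont_isotone_unit le f -> f x <= f y)) ->
  stone_cech b ->
  hausdorff_T2_preorder_compactification le lec c ->
  (forall f : E -> R, continuous f -> unit_valued f ->
     exists g : cE -> R,
       [/\ continuous g, unit_valued g & forall x, g (c x) = f x]) ->
  (forall f : E -> R, cont_isotone_unit le f ->
     exists g : cE -> R,
       [/\ continuous g, unit_valued g, isotone lec (fun a b : R => a <= b) g
         & forall x, g (c x) = f x]) ->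
  compactification_equiv lec (le_beta R le b) c b.
Proof.
(* The assumptions on E only make le_beta a preorder compactification; the
   comparison with c does not need them. *)
move=> _ _ _ _ [cpt_bE hbE [cont_b _ _] dense_b stone].
move=> [cpt_cE hcE pre_c cl_c [[[cont_c _ _] ord_c] dense_c]] ext ext_iso.
have c_iso : isotone le lec c by move=> x y /ord_c.
have [h [cont_h hb]] := stone cE c cpt_cE hcE cont_c.
have h_inj := comparison_injective cpt_bE hbE cont_b dense_b cont_h hb ext.
pose k y := projT1 (cid (comparison_surjective cpt_bE hcE dense_c cont_h hb y)).
have hk : cancel k h by move=> y; rewrite /k; case: cid.
have kh : cancel h k by move=> u; apply: h_inj; rewrite hk.
split.
  exists h; split => //.
  exact: (@comparison_isotone R _ _ _ _ _ _ _ cpt_cE hcE pre_c cl_c cont_c c_iso).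
exists k; split => //.
- exact: compact_hausdorff_inverse_continuous cpt_bE hcE cont_h kh hk.
- exact: (comparison_inverse_isotone dense_b cont_h hb hk ext_iso).
- by move=> x; apply: h_inj; rewrite hk hb.
Qed.
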